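(* Let $E,F$ be normed spaces over $\mathbb K$ with $F$ spherically complete, let $D\subseteq E$ be a linear subspace and $S\in\mathcal L(D,F)$. Let $\mathcal U\subseteq\mathcal L(E,F)$ be nonempty and for each $U\in\mathcal U$ let $\epsilon_U>0$ be such that $\|U-V\|\le\max(\epsilon_U,\epsilon_V)$ for all $U,V\in\mathcal U$, and $\|Sx-Ux\|\le\epsilon_U\|x\|$ for all $U\in\mathcal U$ and $x\in D$. Then there exists $\overline S\in\mathcal L(E,F)$ with $\overline S|_D=S$ and $\|\overline S-U\|\le\epsilon_U$ for every $U\in\mathcal U$.
   Context: $\mathbb K$: nontrivially normed field with ultrametric absolute value; normed space over $\mathbb K$: normed vector space with $\|x+y\|\le\max(\|x\|,\|y\|)$. $\mathcal L(X,Y)$ is the space of continuous linear maps with operator norm. Spherically complete: every decreasing sequence of closed balls (radii $\ge0$) has nonempty intersection. *)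

From HB Require Import structures.
From mathcomp Require Import all_boot all_order all_algebra.
From mathcomp Require Import all_classical reals.
Set Implicit Arguments. Unset Strict Implicit. Unset Printing Implicit Defensive.
Import Order.TTheory GRing.Theory Num.Theory.
Local Open Scope ring_scope.
Local Open Scope classical_set_scope.

Record nontriv_ultra_abs (R : realType) (K : fieldType) (abs : K -> R) : Prop := {
  abs_ge0 : forall a, 0 <= abs a;
  abs_eq0 : forall a, abs a = 0 <-> a = 0;
  absM : forall a b, abs (a * b) = abs a * abs b;
  abs_ultra : forall a b, abs (a + b) <= Num.max (abs a) (abs b);
  abs_nontriv : exists a, abs a != 0 /\ abs a != 1
}.

Record ultra_norm (R : realType) (K : fieldType) (abs : K -> R)
    (E : lmodType K) (nrm : E -> R) : Prop := {
  nrm_ge0 : forall x, 0 <= nrm x;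
  nrm_eq0 : forall x, nrm x = 0 <-> x = 0;
  nrmZ : forall a x, nrm (a *: x) = abs a * nrm x;
  nrm_ultra : forall x y, nrm (x + y) <= Num.max (nrm x) (nrm y)
}.

Definition cball (R : realType) (K : fieldType) (E : lmodType K) (nrm : E -> R)
  (a : E) (r : R) : set E := [set x | nrm (x - a) <= r].

Definition spherically_complete (R : realType) (K : fieldType) (E : lmodType K)
  (nrm : E -> R) : Prop :=
  forall (a : nat -> E) (r : nat -> R),
    (forall n, 0 <= r n) ->
    (forall n, cball nrm (a n.+1) (r n.+1) `<=` cball nrm (a n) (r n)) ->
    exists x, forall n, cball nrm (a n) (r n) x.

Definition lin_subspace (K : fieldType) (E : lmodType K) (D : set E) : Prop :=
  D 0 /\ forall (a : K) x y, D x -> D y -> D (a *: x + y).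

Definition linear_on (K : fieldType) (E F : lmodType K) (D : set E) (T : E -> F) : Prop :=
  forall (a : K) x y, D x -> D y -> T (a *: x + y) = a *: T x + T y.

Definition continuous_on (R : realType) (K : fieldType) (E F : lmodType K)
  (nE : E -> R) (nF : F -> R) (D : set E) (T : E -> F) : Prop :=
  forall x0, D x0 -> forall e : R, 0 < e -> exists2 d : R, 0 < d &
    forall x, D x -> nE (x - x0) < d -> nF (T x - T x0) < e.

Definition cont_lin_on (R : realType) (K : fieldType) (E F : lmodType K)
  (nE : E -> R) (nF : F -> R) (D : set E) (T : E -> F) : Prop :=
  linear_on D T /\ continuous_on nE nF D T.

(* Operator norm ||T|| = sup { ||T x|| / ||x|| : x <> 0 } (sup of empty set is 0). *)
Definition opnorm (R : realType) (K : fieldType) (E F : lmodType K)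
  (nE : E -> R) (nF : F -> R) (T : E -> F) : R :=
  sup [set q | exists x, x != 0 /\ q = nF (T x) / nE x].

From mathcomp Require Import all_boot all_order all_algebra.
From mathcomp Require Import all_classical reals.
From mathcomp Require Import lra.
Import Order.TTheory GRing.Theory Num.Theory.
Set Implicit Arguments. Unset Strict Implicit. Unset Printing Implicit Defensive.
Local Open Scope ring_scope.
Local Open Scope classical_set_scope.

(* The extension is the graph of a maximal subspace G of E * F on which all the
   estimates nF (w - U x) <= eps U * nE x hold; it exists by Zorn's lemma.
   Such a G is the graph of a map defined everywhere: to adjoin a vector e we
   need a value y with nF (y - (U (x + e) - w)) <= eps U * nE (x + e) for all U
   and all (x, w) in G, i.e. a common point of a family of balls.  The bound on
   the distances between the U makes these balls pairwise intersect, and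
   spherical completeness turns this into a common point.  The map obtained is
   linear and within eps U of each U, hence continuous. *)

Section RealFacts.
Variable R : realType.

Lemma bernoulli_ineq (h : R) n : 0 <= h -> 1 + n%:R * h <= (1 + h) ^+ n.
Proof.
move=> h0; elim: n => [|n IH]; first by rewrite mul0r addr0 expr0.
rewrite exprS -natr1.
have : (1 + h) * (1 + n%:R * h) <= (1 + h) * (1 + h) ^+ n.
  by rewrite ler_wpM2l // addr_ge0.
have : 0 <= n%:R * h * h by rewrite !mulr_ge0.
nra.
Qed.

Lemma exists_expr_lt (q t : R) : 0 < q -> q < 1 -> 0 < t -> exists n, q ^+ n < t.
Proof.
move=> q0 q1 t0; set h := q^-1 - 1.
have h0 : 0 < h by rewrite /h subr_gt0 invf_gt1.
have [n hn] : exists n : nat, t^-1 < n%:R * h.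
  exists (Num.bound (t^-1 / h)).
  by rewrite -ltr_pdivrMr // archi_boundP // ltW // divr_gt0 ?invr_gt0.
exists n; have := bernoulli_ineq n (ltW h0).
rewrite /h addrCA subrr addr0 exprVn => hb.
rewrite -ltf_pV2 ?posrE ?exprn_gt0 //.
by apply: lt_le_trans hn _; apply: le_trans hb; rewrite lerDr.
Qed.

Lemma exists_first_below (u : nat -> R) (q d : R) :
  0 <= q -> d <= u 0 -> (exists n, u n < d) -> (forall n, q * u n <= u n.+1) ->
  exists m, q * d <= u m < d.
Proof.
move=> q0 du0 ex uS; case: (ex_minnP ex) => -[|m] um min_m.
  by rewrite ltNge du0 in um.
exists m.+1; rewrite um andbT; apply: le_trans (uS m); rewrite ler_wpM2l //.
by rewrite leNgt; apply/negP => /min_m; rewrite ltnn.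
Qed.

Lemma exists_seq_below_each (I : Type) (r : I -> R) (b : R) (i0 : I) :
  (forall i, b <= r i) -> ~ (exists i, forall j, r i <= r j) ->
  exists s : nat -> I,
    (forall n, r (s n.+1) <= r (s n)) /\ forall j, exists n, r (s n) < r j.
Proof.
move=> rb nomin; set A := [set r i | i in [set: I]].
have Alb : has_lbound A by exists b => _ [i _ <-].
have rho_lt i : inf A < r i.
  rewrite lt_neqAle (ge_inf Alb) ?andbT; last by exists i.
  apply/eqP => rhoE; apply: nomin; exists i => j.
  by rewrite -rhoE (ge_inf Alb) //; exists j.
have step n i : exists j, r j < r i /\ r j < inf A + n.+1%:R^-1.
  have e0 : 0 < Num.min (r i) (inf A + n.+1%:R^-1) - inf A.
    by rewrite subr_gt0 lt_min rho_lt ltrDl invr_gt0 ltr0n.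
  have [_ [j _ <-]] := inf_adherent e0 (conj (ex_intro _ _ (imageT r i0)) Alb).
  by rewrite addrC subrK lt_min => /andP[]; exists j.
have [g hg] := choice (fun p : nat * I => step p.1 p.2).
pose s := fix s n := if n is k.+1 then g (k, s k) else i0.
exists s; split=> [n|j]; first exact/ltW/(hg (n, s n)).1.
have [k hk] := ltr_add_invr (rho_lt j).
by exists k.+1; apply: lt_trans hk; exact: (hg (k, s k)).2.
Qed.

End RealFacts.

Section AbsoluteValue.
Variables (R : realType) (K : fieldType) (abs : K -> R).
Hypothesis habs : nontriv_ultra_abs abs.

Lemma abs0 : abs 0 = 0.
Proof. exact/(abs_eq0 habs). Qed.

Lemma abs_neq0 a : a != 0 -> abs a != 0.
Proof. by apply: contra_neq => /(abs_eq0 habs). Qed.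

Lemma abs1 : abs 1 = 1.
Proof.
apply/eqP; rewrite -(inj_eq (mulfI (abs_neq0 (oner_neq0 K)))).
by rewrite -(absM habs) !mulr1.
Qed.

Lemma absN1 : abs (-1) = 1.
Proof.
apply/eqP; rewrite -sqrp_eq1 ?(abs_ge0 habs) //.
by rewrite expr2 -(absM habs) mulrNN mulr1 abs1.
Qed.

Lemma absV a : abs a^-1 = (abs a)^-1.
Proof.
have [->|a0] := eqVneq a 0; first by rewrite invr0 abs0 invr0.
apply/eqP; rewrite -(inj_eq (mulfI (abs_neq0 a0))).
by rewrite -(absM habs) !mulfV ?abs1 ?abs_neq0.
Qed.

Lemma absX a n : abs (a ^+ n) = abs a ^+ n.
Proof. by elim: n => [|n IH]; rewrite ?expr0 ?abs1 // !exprS (absM habs) IH. Qed.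

Lemma exists_abs_gt0_lt1 : exists p : K, 0 < abs p < 1.
Proof.
have [a [a0 a1]] := abs_nontriv habs.
have a_gt0 : 0 < abs a by rewrite lt0r a0 (abs_ge0 habs).
have [lt1|ge1] := ltP (abs a) 1; first by exists a; rewrite a_gt0.
exists a^-1; rewrite absV invr_gt0 a_gt0 invf_lt1 //.
by rewrite lt_neqAle eq_sym a1.
Qed.

(* Each power of p shrinks by exactly the factor abs p, so the first rescaling
   of s by powers of p that drops below d is still at least abs p * d. *)
Lemma abs_scale_window (p : K) (d s : R) : 0 < abs p < 1 -> 0 < d -> 0 < s ->
  exists c, abs p * d <= abs c * s < d.
Proof.
move=> /andP[p0 p1] d0 s0.
have [N hN] := exists_expr_lt p0 p1 (divr_gt0 s0 d0).
set s' := (abs p)^-1 ^+ N * s.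
have s'E m : abs (p ^+ m * p^-1 ^+ N) * s = abs p ^+ m * s'.
  by rewrite (absM habs) !absX absV mulrA.
have d_lt_s' : d < s'.
  by rewrite /s' exprVn ltr_pdivlMl ?exprn_gt0 // -ltr_pdivlMr.
have [N' hN'] := exists_expr_lt p0 p1 (divr_gt0 d0 (lt_trans d0 d_lt_s')).
have [m hm] : exists m, abs p * d <= abs p ^+ m * s' < d.
  apply: exists_first_below; first exact: ltW.
  - by rewrite expr0 mul1r ltW.
  - by exists N'; rewrite -ltr_pdivlMr // (lt_trans d0 d_lt_s').
  - by move=> n; rewrite exprS mulrA.
by exists (p ^+ m * p^-1 ^+ N); rewrite s'E.
Qed.

End AbsoluteValue.

Section UltraNorm.
Variables (R : realType) (K : fieldType) (abs : K -> R).
Hypothesis habs : nontriv_ultra_abs abs.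
Variables (V : lmodType K) (n : V -> R).
Hypothesis hn : ultra_norm abs n.

Lemma nrm0 : n 0 = 0.
Proof. exact/(nrm_eq0 hn). Qed.

Lemma nrm_gt0 x : x != 0 -> 0 < n x.
Proof.
by move=> x0; rewrite lt0r (nrm_ge0 hn) andbT; apply: contra_neq x0 => /(nrm_eq0 hn).
Qed.

Lemma nrmN x : n (- x) = n x.
Proof. by rewrite -scaleN1r (nrmZ hn) (absN1 habs) mul1r. Qed.

Lemma nrm_distC x y : n (x - y) = n (y - x).
Proof. by rewrite -nrmN opprB. Qed.

Lemma nrmB_le_max x y : n (x - y) <= Num.max (n x) (n y).
Proof. by rewrite -(nrmN y); apply: (nrm_ultra hn). Qed.

Lemma nrm_dist_le_max x y z : n (x - z) <= Num.max (n (x - y)) (n (y - z)).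
Proof. by have := nrm_ultra hn (x - y) (y - z); rewrite addrA subrK. Qed.

(* In an ultrametric space every point of a ball is a center. *)
Lemma cball_sub (a b : V) (ra rb : R) : rb <= ra -> n (b - a) <= ra ->
  cball n b rb `<=` cball n a ra.
Proof.
move=> rab hba y hy; apply: le_trans (nrm_dist_le_max y b a) _.
by rewrite ge_max hba (le_trans hy rab).
Qed.

End UltraNorm.

Section LinearOn.
Variables (K : fieldType) (E F : lmodType K) (T : E -> F).

Lemma linear_on0 (D : set E) : D 0 -> linear_on D T -> T 0 = 0.
Proof.
move=> D0 hT; have := @hT 1 0 0 D0 D0.
by rewrite !scale1r addr0 -{1}[T 0]addr0 => /addrI <-.
Qed.

Hypothesis hT : linear_on setT T.

Lemma linear_onD x y : T (x + y) = T x + T y.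
Proof. by have := @hT 1 x y I I; rewrite !scale1r. Qed.

Lemma linear_onZ a x : T (a *: x) = a *: T x.
Proof. by have := @hT a x 0 I I; rewrite !addr0 (linear_on0 I hT) addr0. Qed.

Lemma linear_onB x y : T (x - y) = T x - T y.
Proof. by rewrite linear_onD -scaleN1r linear_onZ scaleN1r. Qed.

End LinearOn.

Section LinearSubspace.
Variables (K : fieldType) (V : lmodType K) (G : set V).
Hypothesis hG : lin_subspace G.

Lemma lin_subspaceB p q : G p -> G q -> G (p - q).
Proof. by case: hG => _ Glin Gp Gq; rewrite addrC -scaleN1r; apply: Glin. Qed.

Lemma lin_subspaceZ a p : G p -> G (a *: p).
Proof. by case: hG => G0 Glin Gp; rewrite -[_ *: _]addr0; apply: Glin. Qed.

End LinearSubspace.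

Section BoundedOperators.
Variables (R : realType) (K : fieldType) (abs : K -> R).
Hypothesis habs : nontriv_ultra_abs abs.
Variables (E F : lmodType K) (nE : E -> R) (nF : F -> R).
Hypotheses (hE : ultra_norm abs nE) (hF : ultra_norm abs nF).

Definition op_bounded (T : E -> F) := exists C, forall x, nF (T x) <= C * nE x.

Lemma op_boundedN T : op_bounded T -> op_bounded (fun x => - T x).
Proof. by move=> [C hC]; exists C => x; rewrite (nrmN habs hF). Qed.

Lemma op_boundedD T1 T2 : op_bounded T1 -> op_bounded T2 ->
  op_bounded (fun x => T1 x + T2 x).
Proof.
move=> [C1 hC1] [C2 hC2]; exists (Num.max C1 C2) => x.
apply: le_trans (nrm_ultra hF _ _) _; rewrite ge_max.
by rewrite (le_trans (hC1 x)) ?(le_trans (hC2 x)) // ler_wpM2r ?(nrm_ge0 hE) //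
  le_max lexx ?orbT.
Qed.

(* Scale x by a power of an element of absolute value in (0, 1) until it lands
   in the shell [abs p * d, d) on which continuity at 0 gives control. *)
Lemma cont_lin_bounded T : cont_lin_on nE nF setT T -> op_bounded T.
Proof.
move=> [hT cT]; have [d d0 hd] := cT 0 I 1 ltr01.
have [p hp] := exists_abs_gt0_lt1 habs.
exists (abs p * d)^-1 => x; have [->|x0] := eqVneq x 0.
  by rewrite (linear_on0 I hT) (nrm0 hF) (nrm0 hE) mulr0.
have pd0 : 0 < abs p * d by rewrite mulr_gt0 //; case/andP: hp.
have [c /andP[lo hi]] := abs_scale_window habs hp d0 (nrm_gt0 hE x0).
have := hd (c *: x) I; rewrite !subr0 (linear_on0 I hT) subr0 (linear_onZ hT).
rewrite (nrmZ hE) (nrmZ hF) => /(_ hi) hcT.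
rewrite mulrC ler_pdivlMr //; apply: le_trans (ler_wpM2l (nrm_ge0 hF _) lo) _.
by rewrite mulrA [nF _ * _]mulrC ler_piMl ?(nrm_ge0 hE) // ltW.
Qed.

Lemma op_bounded_cont_lin T : linear_on setT T -> op_bounded T ->
  cont_lin_on nE nF setT T.
Proof.
move=> hT [C hC]; split=> // x0 _ e e0.
have C1 : 0 < `|C| + 1 by rewrite ltr_wpDl.
exists (e / (`|C| + 1)) => [|x _ hx]; first by rewrite divr_gt0.
rewrite -(linear_onB hT); apply: le_lt_trans (hC _) _.
apply: le_lt_trans (ler_wpM2r (nrm_ge0 hE _) (ler_norm C)) _.
have nx := nrm_ge0 hE (x - x0); move: hx; rewrite ltr_pdivlMr // => hx.
nra.
Qed.

Lemma opnorm_le T c : 0 <= c -> (forall x, nF (T x) <= c * nE x) ->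
  opnorm nE nF T <= c.
Proof.
move=> c0 hc; rewrite /opnorm; set A := [set q | _].
have [A_ne|A0] := pselect (A !=set0).
  by apply: ge_sup => // _ [x [x0 ->]]; rewrite ler_pdivrMr ?(nrm_gt0 hE).
rewrite (_ : A = set0) ?sup0 //.
by apply/seteqP; split=> // q Aq; apply: A0; exists q.
Qed.

Lemma nrm_le_opnorm T x : op_bounded T -> nF (T x) <= opnorm nE nF T * nE x.
Proof.
move=> [C hC]; have [->|x0] := eqVneq x 0.
  by have := hC 0; rewrite (nrm0 hE) !mulr0.
rewrite -ler_pdivrMr ?(nrm_gt0 hE) //; apply: sup_upper_bound; last by exists x.
split; first by exists (nF (T x) / nE x), x.
by exists C => _ [y [y0 ->]]; rewrite ler_pdivrMr ?(nrm_gt0 hE).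
Qed.

End BoundedOperators.

Section SphericalCompleteness.
Variables (R : realType) (K : fieldType) (abs : K -> R).
Variables (F : lmodType K) (nF : F -> R).
Hypotheses (hF : ultra_norm abs nF) (hFsc : spherically_complete nF).

(* Pairwise intersecting balls are nested; a sequence of them with radii
   decreasing to the infimum is then caught by spherical completeness. *)
Lemma spherically_complete_family (I : Type) (c : I -> F) (r : I -> R) :
  (forall i, 0 <= r i) -> (forall i j, nF (c i - c j) <= Num.max (r i) (r j)) ->
  exists y, forall i, cball nF (c i) (r i) y.
Proof.
move=> r0 hcr.
have nest i j : r j <= r i -> cball nF (c j) (r j) `<=` cball nF (c i) (r i).
  by move=> rji; apply: (cball_sub hF rji); rewrite -(max_r rji).
have [[i0 _]|noI] := pselect (exists i : I, True); last first.
  by exists 0 => i; exfalso; apply: noI; exists i.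
have [[i imin]|nomin] := pselect (exists i, forall j, r i <= r j).
  by exists (c i) => j; apply: nest (imin j) _ _; rewrite /cball /= subrr (nrm0 hF).
have [s [s_dec s_below]] := exists_seq_below_each i0 r0 nomin.
have [y hy] := hFsc (fun n => r0 (s n)) (fun n => nest _ _ (s_dec n)).
by exists y => j; have [n /ltW rnj] := s_below j; apply: nest rnj _ (hy n).
Qed.

End SphericalCompleteness.

Section ApproximatingGraphs.
Variables (R : realType) (K : fieldType) (abs : K -> R).
Hypothesis habs : nontriv_ultra_abs abs.
Variables (E F : lmodType K) (nE : E -> R) (nF : F -> R).
Hypotheses (hE : ultra_norm abs nE) (hF : ultra_norm abs nF).
Hypothesis hFsc : spherically_complete nF.
Variables (UU : set (E -> F)) (eps : (E -> F) -> R).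
Hypothesis hUU : forall U, UU U -> cont_lin_on nE nF setT U.
Hypothesis heps : forall U, UU U -> 0 < eps U.
Hypothesis hUV : forall U V, UU U -> UU V ->
  opnorm nE nF (fun x => U x - V x) <= Num.max (eps U) (eps V).

Definition approx_subspace (G : set (E * F)) :=
  lin_subspace G /\ forall p U, G p -> UU U -> nF (p.2 - U p.1) <= eps U * nE p.1.

Definition adjoin (G : set (E * F)) (e : E) (y : F) : set (E * F) :=
  [set p | exists q l, G q /\ p = q + l *: (e, y)].

Lemma nrm_diff_le U V x : UU U -> UU V ->
  nF (U x - V x) <= Num.max (eps U) (eps V) * nE x.
Proof.
move=> hU hV; apply: le_trans (ler_wpM2r (nrm_ge0 hE x) (hUV hU hV)).
apply: (nrm_le_opnorm hE).
have bU := cont_lin_bounded habs hE hF (hUU hU).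
have bV := op_boundedN habs hF (cont_lin_bounded habs hE hF (hUU hV)).
exact: (op_boundedD hE hF bU bV).
Qed.

(* The balls of radius eps U * nE (x + e) around U (x + e) - w, indexed by U
   and (x, w) in G, pairwise intersect. *)
Lemma approx_centers_close G e U V x w z v :
  approx_subspace G -> UU U -> UU V -> G (x, w) -> G (z, v) ->
  nF ((U (x + e) - w) - (V (z + e) - v)) <=
    Num.max (eps U * nE (x + e)) (eps V * nE (z + e)).
Proof.
move=> hG; wlog le_eps : U V x w z v / eps U <= eps V => [wlog_le|].
  move=> hU hV Gxw Gzv; have [le|/ltW le] := leP (eps U) (eps V); first exact: wlog_le.
  by rewrite (nrm_distC habs hF) maxC; apply: wlog_le.
move=> hU hV Gxw Gzv; have [lU _] := hUU hU.
have -> : U (x + e) - w - (V (z + e) - v) =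
          (U (x - z) - (w - v)) + (U (z + e) - V (z + e)).
  have -> : x + e = (x - z) + (z + e) by rewrite addrA subrK.
  rewrite (linear_onD lU) !opprB [RHS]addrACA -[LHS]addrA.
  by congr (_ + _); rewrite addrCA addrA.
apply: le_trans (nrm_ultra hF _ _) _; rewrite ge_max; apply/andP; split; last first.
  by rewrite le_max -(max_r le_eps) nrm_diff_le ?orbT.
rewrite (nrm_distC habs hF).
apply: le_trans (hG.2 _ _ (lin_subspaceB hG.1 Gxw Gzv) hU) _ => /=.
have : nE (x - z) <= Num.max (nE (x + e)) (nE (z + e)).
  by rewrite -(addrKA e) [e + z]addrC; apply: (nrmB_le_max habs hE).
have eU := ltW (heps hU); have nz := nrm_ge0 hE (z + e).
rewrite le_max => /orP[] hxz; rewrite le_max; apply/orP.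
  by left; rewrite ler_wpM2l.
by right; apply: le_trans (ler_wpM2l eU hxz) (ler_wpM2r nz le_eps).
Qed.

Lemma approx_subspace_adjoin G e y : approx_subspace G ->
  (forall U x w, UU U -> G (x, w) -> nF (y - (U (x + e) - w)) <= eps U * nE (x + e)) ->
  approx_subspace (adjoin G e y).
Proof.
move=> hG hy; have [[G0 Glin] Gest] := hG; split; first split.
- by exists 0, 0; rewrite scale0r addr0.
- move=> a _ _ [q1 [l1 [Gq1 ->]]] [q2 [l2 [Gq2 ->]]].
  exists (a *: q1 + q2), (a * l1 + l2); split; first exact: Glin.
  by rewrite scalerDr scalerA addrACA scalerDl.
move=> _ U [[x w] [l [Gxw ->]]] hU /=.
have [->|l0] := eqVneq l 0; first by rewrite !scale0r !addr0; exact: Gest Gxw hU.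
have [lU _] := hUU hU.
have Gxw' : G (l^-1 *: x, l^-1 *: w) by have := lin_subspaceZ hG.1 l^-1 Gxw.
have xE : x + l *: e = l *: (l^-1 *: x + e) by rewrite scalerDr scalerA mulfV ?scale1r.
have wE : w + l *: y - l *: U (l^-1 *: x + e) =
          l *: (y - (U (l^-1 *: x + e) - l^-1 *: w)).
  by rewrite opprB scalerDr scalerBr scalerA mulfV // scale1r addrCA addrA.
rewrite xE (linear_onZ lU) wE (nrmZ hF) (nrmZ hE) mulrCA.
by rewrite ler_wpM2l ?(abs_ge0 habs) ?hy.
Qed.

Lemma approx_subspace_extend G e : approx_subspace G ->
  exists y, approx_subspace (adjoin G e y).
Proof.
move=> hG; pose I := {i : (E -> F) * (E * F) | UU i.1 /\ G i.2}.
have [y hy] : exists y, forall i : I, cball nF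
    ((sval i).1 ((sval i).2.1 + e) - (sval i).2.2)
    (eps (sval i).1 * nE ((sval i).2.1 + e)) y.
  apply: (spherically_complete_family hF hFsc).
  - by move=> [[U [x w]] [hU Gxw]]; rewrite mulr_ge0 ?(nrm_ge0 hE) ?ltW ?heps.
  - move=> [[U [x w]] [hU Gxw]] [[V [z v]] [hV Gzv]].
    exact: approx_centers_close hG hU hV Gxw Gzv.
exists y; apply: approx_subspace_adjoin => // U x w hU Gxw.
exact: (hy (exist _ (U, (x, w)) (conj hU Gxw))).
Qed.

Lemma approx_subspace_of_pairs (H : set (E * F)) : H 0 ->
  (forall p q, H p -> H q -> exists2 G, approx_subspace G & [/\ G `<=` H, G p & G q]) ->
  approx_subspace H.
Proof.
move=> H0 hH; split; first split=> // a p q Hp Hq.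
  by have [G [[_ Glin] _] [GH Gp Gq]] := hH p q Hp Hq; apply/GH/Glin.
by move=> p U Hp hU; have [G [_ Gest] [_ Gp _]] := hH p p Hp Hp; exact: Gest.
Qed.

(* Zorn is applied to the sets A with A `|` G0 approximating, so that the
   empty chain poses no problem. *)
Lemma exists_maximal_approx_subspace G0 : approx_subspace G0 -> exists G,
  [/\ approx_subspace G, G0 `<=` G &
      forall B, approx_subspace B -> G `<=` B -> B `<=` G].
Proof.
move=> hG0.
have [A [hA maxA]] : exists A, approx_subspace (A `|` G0) /\
    forall B, A `<` B -> ~ approx_subspace (B `|` G0).
  apply: Zorn_bigcup => C C_approx C_total.
  pose C' := C `|` [set set0].
  have C'_approx X : C' X -> approx_subspace (X `|` G0).
    by case=> [/C_approx //|->]; rewrite set0U.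
  have C'_total X Y : C' X -> C' Y -> X `<=` Y \/ Y `<=` X.
    case=> [CX|->]; last by left; apply: sub0set.
    by case=> [CY|->]; [exact: C_total|right; apply: sub0set].
  have C'_cover p : (\bigcup_(X in C) X `|` G0) p -> exists2 X, C' X & (X `|` G0) p.
    case=> [[X CX Xp]|G0p]; first by exists X; [left|left].
    by exists set0; [right|right].
  have C'_sub X : C' X -> X `|` G0 `<=` \bigcup_(X in C) X `|` G0.
    move=> C'X p [Xp|G0p]; last by right.
    by case: C'X Xp => [CX Xp|->//]; left; exists X.
  apply: approx_subspace_of_pairs; first by right; exact: hG0.1.1.
  move=> p q /C'_cover[X C'X Xp] /C'_cover[Y C'Y Yq].
  have [XY|YX] := C'_total X Y C'X C'Y.
    exists (Y `|` G0); first exact: C'_approx.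
    by split=> //; [exact: C'_sub|exact: setSU XY _ Xp].
  exists (X `|` G0); first exact: C'_approx.
  by split=> //; [exact: C'_sub|exact: setSU YX _ Yq].
exists (A `|` G0); split=> [//|p|B hB AB p Bp]; first by right.
apply: contrapT => nAp; apply: (maxA B).
  by split=> [q Aq|BA]; [apply: AB; left|apply/nAp; left; apply: BA].
suff /setUidPl -> : G0 `<=` B by [].
by move=> q G0q; apply: AB; right.
Qed.

Lemma maximal_approx_subspace_total G : approx_subspace G ->
  (forall B, approx_subspace B -> G `<=` B -> B `<=` G) -> forall z, exists w, G (z, w).
Proof.
move=> hG Gmax z; have [y hy] := approx_subspace_extend z hG.
exists y; apply: (Gmax _ hy).
  by move=> p Gp; exists p, 0; rewrite scale0r addr0.
by exists 0, 1; rewrite scale1r add0r; split=> //; exact: hG.1.1.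
Qed.

Lemma approx_subspace_functional U0 G z w w' : UU U0 -> approx_subspace G ->
  G (z, w) -> G (z, w') -> w = w'.
Proof.
move=> hU0 hG Gw Gw'; have := hG.2 _ _ (lin_subspaceB hG.1 Gw' Gw) hU0.
rewrite /= subrr (linear_on0 I (hUU hU0).1) subr0 (nrm0 hE) mulr0 => h.
apply/eqP; rewrite eq_sym -subr_eq0; apply/eqP/(nrm_eq0 hF)/le_anti.
by rewrite h (nrm_ge0 hF).
Qed.

Lemma approx_graph_linear U0 G f : UU U0 -> approx_subspace G ->
  (forall x, G (x, f x)) -> linear_on setT f.
Proof.
move=> hU0 hG Gf a x y _ _; apply: (approx_subspace_functional hU0 hG (Gf _)).
exact: hG.1.2 a _ _ (Gf x) (Gf y).
Qed.

Lemma approx_subspace_graph (D : set E) (S : E -> F) : lin_subspace D ->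
  linear_on D S -> (forall U x, UU U -> D x -> nF (S x - U x) <= eps U * nE x) ->
  approx_subspace [set p | D p.1 /\ p.2 = S p.1].
Proof.
move=> [D0 Dlin] Slin hSU; split; first split.
- by split=> //=; rewrite (linear_on0 D0 Slin).
- by move=> a [x w] [y v] [/= Dx ->] [/= Dy ->]; split=> /=; [exact: Dlin|rewrite Slin].
- by move=> [x w] U [/= Dx ->] hU; exact: hSU.
Qed.

End ApproximatingGraphs.

Unset Implicit Arguments.
Theorem proposition5p2 (R : realType) (K : fieldType) (abs : K -> R)
  (E F : lmodType K) (nE : E -> R) (nF : F -> R)
  (habs : nontriv_ultra_abs abs)
  (hE : ultra_norm abs nE) (hF : ultra_norm abs nF)
  (hFsc : spherically_complete nF)
  (D : set E) (hD : lin_subspace D)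
  (S : E -> F) (hS : cont_lin_on nE nF D S)
  (UU : set (E -> F)) (hUUne : UU !=set0)
  (hUU : forall U, UU U -> cont_lin_on nE nF setT U)
  (eps : (E -> F) -> R) (heps : forall U, UU U -> 0 < eps U)
  (hUV : forall U V, UU U -> UU V ->
     opnorm nE nF (fun x => U x - V x) <= Num.max (eps U) (eps V))
  (hSU : forall U x, UU U -> D x -> nF (S x - U x) <= eps U * nE x) :
  exists Sbar : E -> F,
    [/\ cont_lin_on nE nF setT Sbar,
        (forall x, D x -> Sbar x = S x) &
        (forall U, UU U -> opnorm nE nF (fun x => Sbar x - U x) <= eps U)].
Proof.
have [U0 hU0] := hUUne.
have [G [hG G0G Gmax]] := exists_maximal_approx_subspace (approx_subspace_graph hD hS.1 hSU).
have [f Gf] := choice (maximal_approx_subspace_total habs hE hF hFsc hUU heps hUV hG Gmax).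
have f_lin := approx_graph_linear hE hF hUU hU0 hG Gf.
have f_near U x : UU U -> nF (f x - U x) <= eps U * nE x.
  by move=> hU; exact: hG.2 (x, f x) U (Gf x) hU.
exists f; split.
- apply: (op_bounded_cont_lin hE f_lin).
  have bfU0 : op_bounded nE nF (fun x => f x - U0 x).
    by exists (eps U0) => x; exact: f_near.
  have [C hC] := op_boundedD hE hF bfU0 (cont_lin_bounded habs hE hF (hUU U0 hU0)).
  by exists C => x; have := hC x; rewrite subrK.
- by move=> x Dx; apply: (approx_subspace_functional hE hF hUU hU0 hG (Gf x)); exact: G0G.
- by move=> U hU; apply: (opnorm_le hE (ltW (heps U hU))) => x; exact: f_near.
Qed.
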